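(* For every $t\in(0,1)$, $$\lim_{n \to \infty} \sum_{k \ge 0} B^{n-k}_k(t;1) = 2^{-t}.$$
   Context: For $h\ge 0$, the $h$-Bernstein polynomials are $$B^m_k(t;h) = \binom{m}{k}\frac{\prod_{i=0}^{k-1}(t+ih)\prod_{i=0}^{m-k-1}(1-t+ih)}{\prod_{i=0}^{m-1}(1+ih)}$$ for integers $0\le k\le m$ (empty products equal $1$), and $B^m_k(t;h)=0$ for $m<k$. Here $h=1$. *)

From HB Require Import structures.
From mathcomp Require Import all_boot all_order all_algebra.
From mathcomp Require Import all_classical all_reals all_analysis.
Set Implicit Arguments. Unset Strict Implicit. Unset Printing Implicit Defensive.
Import Order.TTheory GRing.Theory Num.Theory.
Local Open Scope ring_scope.

Definition hBernstein (R : realType) (h : R) (m k : nat) (t : R) : R :=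
  if (k <= m)%N then
    'C(m, k)%:R * (\prod_(i < k) (t + i%:R * h))
      * (\prod_(i < m - k) (1 - t + i%:R * h))
      / (\prod_(i < m) (1 + i%:R * h))
  else 0.

From HB Require Import structures.
From mathcomp Require Import all_boot all_order all_algebra.
From mathcomp Require Import all_classical all_reals all_analysis.
From mathcomp Require Import ring lra zify.
Import Order.TTheory GRing.Theory Num.Theory.
Set Implicit Arguments. Unset Strict Implicit. Unset Printing Implicit Defensive.
Local Open Scope classical_set_scope.
Local Open Scope ring_scope.

(* For h = 1 the weight B^(n-k)_k(t;1) is ((t))_k ((1-t))_(n-2k), with
   ((x))_k = x(x+1)...(x+k-1)/k!.  Summed over k these diagonal sums satisfy the
   same three-term recurrence, with the same initial values, as the partial
   sums T_n = \sum_(j <= n) binom(-t, j) of the binomial series of (1+y)^-t at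
   y = 1; in generating-function terms, (1-y^2)^-t (1-y)^(t-1) = (1+y)^-t/(1-y).
   The Taylor polynomial T_n(y) solves (1+y) T_n' + t T_n = (t+n) binom(-t,n) y^n,
   so on [0,1] the derivative of (1+y)^t T_n(y) is dominated by that of
   ((t))_(n+1) y^(n+1), whence |2^t T_n(1) - 1| <= ((t))_(n+1).  This tends to 0
   since ((t))_n (1 + (1-t) H_n) <= 1 and the harmonic sums H_n diverge. *)

Section Multichoose.
Variable R : numFieldType.
Implicit Types (x : R) (k m : nat).

Definition multichoose x k : R := (\prod_(i < k) (x + i%:R)) / k`!%:R.

Lemma natr_fact_neq0 k : (k`!%:R : R) != 0.
Proof. by rewrite pnatr_eq0 -lt0n fact_gt0. Qed.

Lemma multichoose0 x : multichoose x 0 = 1.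
Proof. by rewrite /multichoose big_ord0 fact0 divr1. Qed.

Lemma multichooseS x k :
  k.+1%:R * multichoose x k.+1 = (x + k%:R) * multichoose x k.
Proof.
rewrite /multichoose big_ord_recr /= factS natrM.
have k1 : (k.+1%:R : R) != 0 by rewrite pnatr_eq0.
by field; rewrite natr_fact_neq0 addrC natr1 k1.
Qed.

Lemma multichooseSS x m :
  m.+2%:R * multichoose x m.+2
  = x * multichoose x m.+1 + (x + m%:R) * multichoose x m.
Proof. by rewrite multichooseS mulrDl multichooseS. Qed.

Lemma multichoose1 x : multichoose x 1 = x.
Proof. by rewrite /multichoose big_ord1 addr0 /= divr1. Qed.

Lemma multichoose_ge0 x k : 0 <= x -> 0 <= multichoose x k.
Proof.
by move=> x0; rewrite divr_ge0 // prodr_ge0 // => i _; rewrite addr_ge0.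
Qed.

(* [negbinom x k] is the binomial coefficient binom(-x, k). *)
Definition negbinom x k : R := (-1) ^+ k * multichoose x k.

Lemma negbinomS x k :
  k.+1%:R * negbinom x k.+1 = - ((x + k%:R) * negbinom x k).
Proof. by rewrite /negbinom exprS mulrCA multichooseS; ring. Qed.

Definition negbinom_psum x n : R := \sum_(j < n.+1) negbinom x j.

Lemma negbinom_psum_rec x n :
  n.+2%:R * negbinom_psum x n.+2
  = (1 - x) * negbinom_psum x n.+1 + (n.+1%:R + x) * negbinom_psum x n.
Proof.
by rewrite /negbinom_psum !big_ord_recr /= mulrDr negbinomS; ring.
Qed.

End Multichoose.

Lemma rec2_unique (R : numFieldType) (a b u v : nat -> R) :
  u 0 = v 0 -> u 1 = v 1 ->
  (forall n, n.+2%:R * u n.+2 = a n * u n.+1 + b n * u n) ->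
  (forall n, n.+2%:R * v n.+2 = a n * v n.+1 + b n * v n) ->
  u =1 v.
Proof.
move=> u0 u1 hu hv.
suff uv n : u n = v n /\ u n.+1 = v n.+1 by move=> n; case: (uv n).
elim: n => [|n [IHn IHSn]] //; split=> //.
have n2 : (n.+2%:R : R) != 0 by rewrite pnatr_eq0.
by apply: (mulfI n2); rewrite hu hv IHn IHSn.
Qed.

Section DiagonalSums.
Variable R : numFieldType.
Implicit Types (x : R) (n k : nat).

Definition diag_weight x n k : R :=
  if (k.*2 <= n)%N then multichoose x k * multichoose (1 - x) (n - k.*2) else 0.

Definition diag_sum x n : R := \sum_(k < n.+1) diag_weight x n k.

Lemma diag_weight_eq0 x n k : (n < k.*2)%N -> diag_weight x n k = 0.
Proof. by rewrite /diag_weight ltnNge => /negbTE ->. Qed.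

Lemma diag_sum_widen x n N : (n < N)%N ->
  \sum_(k < N) diag_weight x n k = diag_sum x n.
Proof.
move=> nN; rewrite /diag_sum (big_ord_widen _ (diag_weight x n) nN).
rewrite [RHS]big_mkcond; apply: eq_bigr => k _; case: ltnP => // nk.
by rewrite diag_weight_eq0 //; lia.
Qed.

Lemma diag_weight_rec x n k :
  (n.+2%:R - 2 * k%:R) * diag_weight x n.+2 k
  = (1 - x) * diag_weight x n.+1 k + (n.+1%:R - 2 * k%:R - x) * diag_weight x n k.
Proof.
rewrite /diag_weight; case: (ltnP n (k.*2)) => kn; last first.
  have [m nE] : exists m, n = (k.*2 + m)%N by exists (n - k.*2)%N; lia.
  rewrite !ifT; try lia.
  have -> : (n.+2 - k.*2 = m.+2)%N by lia.
  have -> : (n.+1 - k.*2 = m.+1)%N by lia.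
  have -> : (n - k.*2 = m)%N by lia.
  rewrite nE -mul2n.
  transitivity (multichoose x k * (m.+2%:R * multichoose (1 - x) m.+2)); first ring.
  by rewrite multichooseSS; ring.
case: (ltnP n.+1 (k.*2)) => kn1; last first.
  have kE : k.*2 = n.+1 by lia.
  rewrite !ifT; try lia.
  have k2 : 2 * k%:R = n.+1%:R :> R by rewrite -natrM mul2n kE.
  by rewrite k2 kE subSnn subnn multichoose1 multichoose0; ring.
case: ifP => [kn2|_]; last by ring.
have k2 : 2 * k%:R = n.+2%:R :> R by rewrite -natrM mul2n; congr _%:R; lia.
by rewrite k2 subrr; ring.
Qed.

Lemma diag_weightS x n k :
  k.+1%:R * diag_weight x n.+2 k.+1 = (x + k%:R) * diag_weight x n k.
Proof.
rewrite /diag_weight; have -> : (k.+1.*2 <= n.+2)%N = (k.*2 <= n)%N by lia.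
case: ifP => _; last by rewrite !mulr0.
have -> : (n.+2 - k.+1.*2 = n - k.*2)%N by lia.
by rewrite mulrA multichooseS mulrA.
Qed.

Lemma diag_sum_rec x n :
  n.+2%:R * diag_sum x n.+2
  = (1 - x) * diag_sum x n.+1 + (n.+1%:R + x) * diag_sum x n.
Proof.
rewrite {1}/diag_sum mulr_sumr.
transitivity (\sum_(k < n.+3) (n.+2%:R - 2 * k%:R) * diag_weight x n.+2 k
              + \sum_(k < n.+3) 2 * k%:R * diag_weight x n.+2 k).
  by rewrite -big_split /=; apply: eq_bigr => k _; ring.
rewrite [X in _ + X]big_ord_recl /= mulr0 mul0r add0r.
under eq_bigr do rewrite diag_weight_rec.
under [X in _ + X]eq_bigr => k _ do rewrite /bump /= add1n -mulrA diag_weightS mulrA.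
rewrite big_split /= -mulr_sumr diag_sum_widen // -addrA.
rewrite [X in _ + (X + _)]big_ord_recr /= diag_weight_eq0 ?mulr0 ?addr0; last lia.
rewrite -big_split -(diag_sum_widen x (leqnSn n.+1)).
by congr (_ + _); rewrite mulr_sumr; apply: eq_bigr => k _ /=; ring.
Qed.

Lemma diag_sum_negbinom x : diag_sum x =1 negbinom_psum x.
Proof.
apply: (rec2_unique (a := fun=> 1 - x) (b := fun n => n.+1%:R + x)).
- rewrite /diag_sum /negbinom_psum !big_ord1 /diag_weight /negbinom /=.
  by rewrite !multichoose0 expr0 mulr1.
- rewrite /diag_sum /negbinom_psum !big_ord_recr !big_ord0 /diag_weight /negbinom /=.
  by rewrite !multichoose0 !multichoose1 expr0 expr1 mulN1r !mul1r !add0r addr0.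
- exact: diag_sum_rec.
- by move=> n; rewrite negbinom_psum_rec addrC.
Qed.

End DiagonalSums.

Lemma prod_1Dnat_fact (R : numFieldType) m :
  \prod_(i < m) (1 + i%:R * 1) = (m`!%:R : R).
Proof.
elim: m => [|m IHm]; first by rewrite big_ord0.
by rewrite big_ord_recr /= IHm factS natrM mulr1 mulrC addrC natr1.
Qed.

Lemma hBernstein1_diag (R : realType) (t : R) n k : (k <= n)%N ->
  hBernstein 1 (n - k) k t = diag_weight t n k.
Proof.
move=> kn; rewrite /hBernstein /diag_weight /multichoose.
have -> : (k <= n - k)%N = (k.*2 <= n)%N by lia.
case: ifP => // k2n; have -> : (n - k - k = n - k.*2)%N by lia.
under eq_bigr do rewrite mulr1.
under [X in _ * X / _]eq_bigr do rewrite mulr1.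
rewrite prod_1Dnat_fact.
have binE : ('C(n - k, k) * (k`! * (n - k.*2)`!))%:R = (n - k)`!%:R :> R.
  by rewrite (_ : (n - k.*2 = n - k - k)%N) ?bin_fact //; lia.
rewrite !natrM in binE; rewrite -binE.
have binC : 'C(n - k, k)%:R != 0 :> R by rewrite pnatr_eq0 -lt0n bin_gt0; lia.
by field; rewrite binC !natr_fact_neq0.
Qed.

Definition negbinom_poly (R : numFieldType) (x : R) n : {poly R} :=
  \poly_(j < n.+1) negbinom x j.

Lemma negbinom_poly_ode (R : numFieldType) (x : R) n :
  ('X + 1) * (negbinom_poly x n)^`() + x *: negbinom_poly x n
  = ((x + n%:R) * negbinom x n) *: 'X^n.
Proof.
set p := negbinom_poly x n.
have coefXD i : ('X * p^`())`_i = p`_i *+ i.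
  by case: i => [|i]; rewrite coefXM ?coef_deriv //= mulr0n.
apply/polyP => i; rewrite mulrDl mul1r !coefD coefXD coef_deriv !coefZ coefXn.
rewrite !coef_poly !ltnS; have [ilt|igt|->] := ltngtP i n.
- by rewrite -[_ *+ i.+1]mulr_natl negbinomS /=; ring.
- by rewrite /=; ring.
- by rewrite /=; ring.
Qed.

Lemma ler_dist_derive (R : realType) (f g f' g' : R -> R) (a b : R) : a <= b ->
  (forall x, x \in `[a, b] -> is_derive x 1 f (f' x)) ->
  (forall x, x \in `[a, b] -> is_derive x 1 g (g' x)) ->
  (forall x, x \in `]a, b[ -> `|f' x| <= g' x) ->
  `|f b - f a| <= g b - g a.
Proof.
move=> ab df dg f'g'.
have ndecr e : `|e| <= 1 -> g a + e * f a <= g b + e * f b.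
  move=> e1; pose F := g + e *: f.
  have dF x : x \in `[a, b] -> is_derive x 1 F (g' x + e * f' x).
    by move=> xab; apply: is_deriveD; [exact: dg | apply: is_deriveZ; exact: df].
  have dFo x : x \in `]a, b[ -> is_derive x 1 F (g' x + e * f' x).
    by move=> xab; apply: dF; apply: subset_itv_oo_cc.
  apply: (@ger0_derive1_ndecr _ F a b) => //.
  - by move=> x /dFo [].
  - move=> x xab; rewrite derive1E (@derive_val _ _ _ _ _ _ _ (dFo x xab)).
    have : `|e * f' x| <= g' x.
      rewrite normrM (le_trans _ (f'g' x xab)) //.
      by rewrite -[leRHS]mul1r ler_wpM2r.
    by rewrite ler_norml => /andP[]; lra.
  - by apply: derivable_within_continuous => x /dF [].
have := ndecr 1; have := ndecr (-1); rewrite normrN normr1 lexx.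
by move=> /(_ isT) h1 /(_ isT) h2; rewrite ler_norml; apply/andP; split; lra.
Qed.

Lemma is_derive_powRD1 (R : realType) (t x : R) : -1 < x ->
  is_derive x 1 (fun y => (y + 1) `^ t) (t * (x + 1) `^ (t - 1)).
Proof.
move=> x1; have x10 : 0 < x + 1 by rewrite -ltrBlDr sub0r.
have := @is_derive1_comp _ _ (shift 1) x _ _ (is_derive1_powR t x10) (is_derive_shift x 1 1).
by rewrite mulr1.
Qed.

Lemma is_derive_powRD1_Mnegbinom_poly (R : realType) (t x : R) n : 0 < t -> -1 < x ->
  is_derive x 1 ((fun y => (y + 1) `^ t) * horner (negbinom_poly t n))
    ((x + 1) `^ (t - 1) * ((t + n%:R) * negbinom t n * x ^+ n)).
Proof.
move=> t0 x1; have x10 : 0 < x + 1 by rewrite -ltrBlDr sub0r.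
set p := negbinom_poly t n.
apply: is_derive_eq; first exact: is_deriveM (is_derive_powRD1 t x1) (is_derive_poly p x).
have ode := congr1 (horner^~ x) (negbinom_poly_ode t n).
rewrite hornerD hornerM hornerD hornerX hornerC !hornerZ hornerXn in ode.
by rewrite -(mulr_powRB1 (ltW x10) t0) -ode /GRing.scale /=; ring.
Qed.

Lemma negbinom_psum_err (R : realType) (t : R) n : 0 < t <= 1 ->
  `|2 `^ t * negbinom_psum t n - 1| <= multichoose t n.+1.
Proof.
case/andP => t0 t1; set p := negbinom_poly t n.
pose q : {poly R} := multichoose t n.+1 *: 'X^(n.+1).
pose f : R -> R := (fun x => (x + 1) `^ t) * horner p.
have f_der (x : R) : x \in `[0, 1] ->
    is_derive x 1 f ((x + 1) `^ (t - 1) * ((t + n%:R) * negbinom t n * x ^+ n)).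
  by rewrite in_itv /= => /andP[x0 _]; apply: is_derive_powRD1_Mnegbinom_poly => //; lra.
have q_der (x : R) : (q^`()).[x] = multichoose t n.+1 * (n.+1%:R * x ^+ n).
  by rewrite derivZ derivXn hornerZ hornerMn hornerXn mulr_natl.
have bound (x : R) : x \in `]0, 1[ ->
    `|(x + 1) `^ (t - 1) * ((t + n%:R) * negbinom t n * x ^+ n)| <= (q^`()).[x].
  rewrite in_itv /= => /andP[x0 x1].
  have pow_le1 : (x + 1) `^ (t - 1) <= 1.
    by rewrite -[leRHS](powRr0 (x + 1)); apply: ler_powR; lra.
  have M0 : 0 <= (t + n%:R) * multichoose t n * x ^+ n.
    apply: mulr_ge0; last exact: exprn_ge0 (ltW x0).
    by apply: mulr_ge0; [rewrite addr_ge0 // ltW | exact: multichoose_ge0 (ltW t0)].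
  have -> : (t + n%:R) * negbinom t n * x ^+ n
            = (-1) ^+ n * ((t + n%:R) * multichoose t n * x ^+ n) by rewrite /negbinom; ring.
  rewrite q_der [leRHS]mulrCA [leRHS]mulrA multichooseS.
  rewrite normrM normrM normrX normrN1 expr1n mul1r.
  rewrite (ger0_norm (powR_ge0 _ _)) (ger0_norm M0).
  by rewrite -[leRHS]mul1r ler_wpM2r.
have := ler_dist_derive ler01 f_der (fun x _ => is_derive_poly q x) bound.
have f1 : f 1 = 2 `^ t * negbinom_psum t n.
  rewrite (_ : f 1 = (1 + 1) `^ t * p.[1]) // horner_poly.
  by congr (_ * _); apply: eq_bigr => j _; rewrite expr1n mulr1.
have f0 : f 0 = 1.
  rewrite (_ : f 0 = (0 + 1) `^ t * p.[0]) // add0r powR1 mul1r horner_coef0.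
  by rewrite coef_poly /negbinom expr0 mul1r multichoose0.
by rewrite f1 f0 !hornerZ !hornerXn expr1n expr0n mulr1 mulr0 subr0.
Qed.

Lemma multichoose_harmonic_le1 (R : realFieldType) (x : R) n : 0 <= x <= 1 ->
  multichoose x n * (1 + (1 - x) * series harmonic n) <= 1.
Proof.
case/andP => x0 x1; elim: n => [|n IHn].
  by rewrite multichoose0 /series /= big_geq // mulr0 addr0 mulr1.
have n1 : (0 : R) < n.+1%:R by rewrite ltr0n.
set y := (1 - x) / n.+1%:R.
have y0 : 0 <= y by rewrite divr_ge0 // ?subr_ge0 // ltW.
have mcS : multichoose x n.+1 = multichoose x n * (1 - y).
  apply: (mulfI (lt0r_neq0 n1)); rewrite multichooseS /y.
  by field; rewrite lt0r_neq0.
rewrite seriesSr /= mcS.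
set A := 1 + (1 - x) * series harmonic n in IHn *.
have A1 : 1 <= A.
  by rewrite lerDl mulr_ge0 ?subr_ge0 // /series /= sumr_ge0.
have -> : 1 + (1 - x) * (series harmonic n + n.+1%:R^-1) = A + y by rewrite /A /y; ring.
clearbody A y.
have P0 : 0 <= multichoose x n := multichoose_ge0 n x0.
have key : 0 <= multichoose x n * y * (A - 1 + y).
  by apply: mulr_ge0; [exact: mulr_ge0 | lra].
have -> : multichoose x n * (1 - y) * (A + y)
          = multichoose x n * A - multichoose x n * y * (A - 1 + y) by ring.
lra.
Qed.

Lemma multichoose_cvg0 (R : realType) (x : R) : 0 <= x < 1 ->
  multichoose x n @[n --> \oo] --> 0.
Proof.
case/andP => x0 x1.
pose h n := 1 + (1 - x) * series (@harmonic R) n.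
have h_gt0 n : 0 < h n.
  by rewrite ltr_pwDl // mulr_ge0 ?subr_ge0 ?(ltW x1) // /series /= sumr_ge0.
have harmonic_cvgy : series (@harmonic R) @ \oo --> +oo.
  apply: nondecreasing_dvgn_lt; last exact: dvg_harmonic.
  by apply: nondecreasing_series => k _ _; exact: harmonic_ge0.
have h_cvgy : h @ \oo --> +oo.
  apply/cvgryPge => A; move/cvgryPge : harmonic_cvgy => /(_ (A / (1 - x))).
  apply: filterS => m; rewrite ler_pdivrMr ?subr_gt0 // => hA.
  by rewrite /h mulrC ler_wpDl.
have x01 : 0 <= x <= 1 by rewrite x0 ltW.
apply/cvgrPdist_le => e e0.
move/cvgryPge : h_cvgy => /(_ e^-1); apply: filterS => n hn.
rewrite sub0r normrN ger0_norm ?multichoose_ge0 // -(ler_pM2r (h_gt0 n)).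
apply: le_trans (multichoose_harmonic_le1 n x01) _.
by rewrite -(mulfV (lt0r_neq0 e0)) ler_pM2l.
Qed.

Lemma negbinom_psum_cvg (R : realType) (t : R) : 0 < t < 1 ->
  negbinom_psum t n @[n --> \oo] --> 2 `^ (- t).
Proof.
case/andP => t0 t1.
have /cvgrPdist_lt mc_cvg0 : multichoose t n.+1 @[n --> \oo] --> 0.
  by rewrite (@cvg_shiftS R^o (multichoose t)); apply: multichoose_cvg0; rewrite ltW.
have pow_ge1 : 1 <= 2 `^ t.
  by rewrite -[leLHS](powRr0 2); apply: ler_powR; rewrite ?ler1n // ltW.
have pow_gt0 : 0 < 2 `^ t by apply: lt_le_trans pow_ge1.
apply/cvgrPdist_lt => e e0; apply: filterS (mc_cvg0 e e0) => n.
rewrite sub0r normrN (ger0_norm (multichoose_ge0 _ (ltW t0))) => mc_le.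
have -> : 2 `^ (- t) - negbinom_psum t n
          = (2 `^ t)^-1 * - (2 `^ t * negbinom_psum t n - 1).
  by rewrite powRN; field; rewrite gt_eqF.
rewrite normrM normrN ger0_norm ?invr_ge0 ?ltW //.
have t01 : 0 < t <= 1 by rewrite t0 ltW.
apply: le_lt_trans _ (le_lt_trans (negbinom_psum_err n t01) mc_le).
by rewrite -[leRHS]mul1r ler_wpM2r // invf_le1.
Qed.

Unset Implicit Arguments.

Theorem mainTheorem12 (R : realType) (t : R) (ht : 0 < t < 1) :
  (fun n : nat => \sum_(k < n.+1) hBernstein 1 (n - k) k t) @ \oo
    --> (2 : R) `^ (- t).
Proof.
have -> : (fun n : nat => \sum_(k < n.+1) hBernstein 1 (n - k) k t) = negbinom_psum t.
  apply/funext => n; rewrite -diag_sum_negbinom; apply: eq_bigr => k _.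
  by apply: hBernstein1_diag; rewrite -ltnS.
exact: negbinom_psum_cvg.
Qed.
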